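(* Let $\alpha\in[0,\pi/2)$, $B,C,D\in M_n$, $A\in\Pi^n_{s,\alpha}$ and $q\in\mathbb{C}$ with $0<|q|\le1$. Then \[ |q|\,w_q(ACB\pm BDA)\le 2\sec(\alpha)\max\{\|C\|,\|D\|\}\,w_q(A)\,\|B\|. \]
   Context: $M_n$ is the algebra of complex $n\times n$ matrices with the operator norm $\|\cdot\|$. For $|q|\le1$, $w_q(A)=\sup\{|\langle Ax,y\rangle|: \|x\|=\|y\|=1,\ \langle x,y\rangle=q\}$. $W(A)=\{\langle Ax,x\rangle:\|x\|=1\}$, $S_\alpha=\{z:\operatorname{Re}z>0,\ |\operatorname{Im}z|\le\tan(\alpha)\operatorname{Re}z\}$ and $\Pi^n_{s,\alpha}=\{A\in M_n: W(A)\subseteq S_\alpha\}$. *)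

From HB Require Import structures.
From mathcomp Require Import all_boot all_order all_algebra.
From mathcomp Require Import all_classical all_reals.
From mathcomp Require Import trigo.
From mathcomp Require Import complex.
Set Implicit Arguments. Unset Strict Implicit. Unset Printing Implicit Defensive.
Import Order.TTheory GRing.Theory Num.Theory.
Local Open Scope ring_scope.
Local Open Scope classical_set_scope.

Section QNumRadius.
Variable R : realType.
Local Notation C := (R[i]).

Definition cmod (z : C) : R := Num.sqrt (complex.Re z ^+ 2 + complex.Im z ^+ 2).

Definition inner (n : nat) (x y : 'cV[C]_n) : C :=
  \sum_(i < n) x i 0 * (y i 0)^*%C.

Definition vnorm (n : nat) (x : 'cV[C]_n) : R := Num.sqrt (complex.Re (inner x x)).

Definition opnorm (n : nat) (A : 'M[C]_n) : R :=
  sup [set vnorm (A *m x) | x in [set x : 'cV[C]_n | vnorm x = 1]].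

Definition wq (n : nat) (q : C) (A : 'M[C]_n) : R :=
  sup [set r : R | exists x y : 'cV[C]_n,
         [/\ vnorm x = 1, vnorm y = 1, inner x y = q & r = cmod (inner (A *m x) y)]].

Definition numrange (n : nat) (A : 'M[C]_n) : set C :=
  [set inner (A *m x) x | x in [set x : 'cV[C]_n | vnorm x = 1]].

Definition sector (a : R) : set C :=
  [set z : C | 0 < complex.Re z /\ `|complex.Im z| <= tan a * complex.Re z].

Definition Pi_s (n : nat) (a : R) : set 'M[C]_n :=
  [set A | numrange A `<=` sector a].

End QNumRadius.

(* The q-numerical radius is dominated by the operator norm (Cauchy-Schwarz), so
   |q| w_q(ACB +- BDA) <= 2 max(||C||, ||D||) ||B|| |q| ||A||, and it remains to
   show |q| ||A|| <= sec(alpha) w_q(A) for A in Pi_{s,alpha}.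

   First, |q| |<Au,u>| <= w_q(A) for every unit vector u: if z is a unit vector
   orthogonal to u, then y = conj(q) u +- sqrt(1 - |q|^2) z is a unit vector with
   <u,y> = q, and for a suitable sign |<Au,y>| >= |q <Au,u>|.  Such a z exists
   when n >= 2; when |q| = 1 take z = 0; otherwise no two unit vectors have inner
   product q and w_q vanishes identically.

   Second, a form f with |Im f(u,u)| <= t Re f(u,u) satisfies
   |f(x,y)|^2 <= (1 + t^2) Re f(x,x) Re f(y,y): for t > 0 write
   4t f = (1 + it) P + (1 - it) Q, where P and Q are the Hermitian parts of
   (t - i) f and (t + i) f, two positive forms, and apply Cauchy-Schwarz to each.
   With t = tan(alpha), f(x,y) = <Ax,y> and y = Ax this gives
   ||A|| <= sec(alpha) sup_u Re<Au,u> <= sec(alpha) w_q(A) / |q|. *)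

From HB Require Import structures.
From mathcomp Require Import all_boot all_order all_algebra.
From mathcomp Require Import all_classical all_reals.
From mathcomp Require Import trigo.
From mathcomp Require Import complex.
From mathcomp Require Import ring lra.
Import Order.TTheory GRing.Theory Num.Theory.
Local Open Scope ring_scope.
Local Open Scope classical_set_scope.
Local Open Scope complex_scope.
(* A bare [Re] would denote the real part of a [numClosedFieldType], valued in [R[i]]. *)
Local Notation Re := complex.Re.
Local Notation Im := complex.Im.

Section ComplexModulus.
Context {R : realType}.
Implicit Types (z w : R[i]) (r : R).

Lemma cmodE z : cmod z = Normc.normc z.
Proof. by case: z. Qed.

Lemma cmod_ge0 z : 0 <= cmod z.
Proof. exact: sqrtr_ge0. Qed.

Lemma cmodM z w : cmod (z * w) = cmod z * cmod w.
Proof. by rewrite !cmodE Normc.normcM. Qed.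

Lemma cmodD z w : cmod (z + w) <= cmod z + cmod w.
Proof. by rewrite !cmodE; exact: le_normcD. Qed.

Lemma cmodN z : cmod (- z) = cmod z.
Proof. by rewrite !cmodE; exact: normcN. Qed.

Lemma cmodJ z : cmod z^*%C = cmod z.
Proof. by case: z => a b; rewrite /cmod /= sqrrN. Qed.

Lemma cmod_eq0 z : cmod z = 0 -> z = 0.
Proof. by rewrite cmodE; exact: Normc.eq0_normc. Qed.

Lemma cmod_sqr z : cmod z ^+ 2 = Re z ^+ 2 + Im z ^+ 2.
Proof. by rewrite sqr_sqrtr // addr_ge0 ?sqr_ge0. Qed.

Lemma cmod_real r : cmod r%:C = `|r|.
Proof. by rewrite /cmod /= expr0n addr0 sqrtr_sqr. Qed.

Lemma Re_le_cmod z : Re z <= cmod z.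
Proof.
rewrite (le_trans (ler_norm _)) // -sqrtr_sqr ler_sqrt ?lerDl ?sqr_ge0 //.
by rewrite addr_ge0 ?sqr_ge0.
Qed.

Lemma Re_realM r z : Re (r%:C * z) = r * Re z.
Proof. by case: z => a b /=; ring. Qed.

Lemma Im_realM r z : Im (r%:C * z) = r * Im z.
Proof. by case: z => a b /=; ring. Qed.

End ComplexModulus.

Section RealInequalities.
Context {R : realType}.

Lemma le_mul_of_quadratic_ge0 (a b N : R) : 0 <= b -> 0 <= N ->
  (forall l, 0 <= a - 2 * l * N + l ^+ 2 * N * b) -> N <= a * b.
Proof.
move=> b_ge0 N_ge0 quad_ge0; have [b_gt0|b_le0] := ltrP 0 b.
  have := quad_ge0 b^-1; rewrite -(pmulr_rge0 _ b_gt0).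
  have -> : b * (a - 2 * b^-1 * N + b^-1 ^+ 2 * N * b) = a * b - N.
    by field; rewrite gt_eqF.
  by rewrite subr_ge0.
have b0 : b = 0 by apply/le_anti/andP.
rewrite b0 mulr0 leNgt; apply/negP => N_gt0.
have := quad_ge0 ((a + 1) / (2 * N)); rewrite b0 mulr0 addr0.
have -> : 2 * ((a + 1) / (2 * N)) * N = a + 1 by field; rewrite gt_eqF.
lra.
Qed.

Lemma sqrD_le_mulD (p q P1 P2 Q1 Q2 : R) :
  0 <= p -> 0 <= q -> 0 <= P1 -> 0 <= P2 -> 0 <= Q1 -> 0 <= Q2 ->
  p ^+ 2 <= P1 * P2 -> q ^+ 2 <= Q1 * Q2 ->
  (p + q) ^+ 2 <= (P1 + Q1) * (P2 + Q2).
Proof.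
move=> p0 q0 P10 P20 Q10 Q20 hp hq.
have amgm : 2 * (p * q) <= P1 * Q2 + Q1 * P2.
  rewrite -ler_sqr ?nnegrE ?(mulr_ge0, addr_ge0) //.
  have : (p * q) ^+ 2 <= (P1 * P2) * (Q1 * Q2) by rewrite exprMn ler_pM ?sqr_ge0.
  have := sqr_ge0 (P1 * Q2 - Q1 * P2); nra.
nra.
Qed.

Lemma le_max_l (x y : R) : x <= Num.max x y.
Proof. by rewrite le_max lexx. Qed.

Lemma le_max_r (x y : R) : y <= Num.max x y.
Proof. by rewrite le_max lexx orbT. Qed.

Lemma sum_mul3_le {a b c d M : R} : 0 <= a -> 0 <= b -> c <= M -> d <= M ->
  a * c * b + b * d * a <= 2 * M * a * b.
Proof.
move=> a_ge0 b_ge0 c_le d_le.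
have := ler_wpM2r b_ge0 (ler_wpM2l a_ge0 c_le).
have := ler_wpM2r a_ge0 (ler_wpM2l b_ge0 d_le).
lra.
Qed.

Lemma ler_wpM_subst {c w a b M s W : R} : 0 <= c -> 0 <= M -> 0 <= b ->
  w <= 2 * M * a * b -> c * a <= s * W -> c * w <= 2 * s * M * W * b.
Proof.
move=> c_ge0 M_ge0 b_ge0 w_le ca_le.
rewrite (le_trans (ler_wpM2l c_ge0 w_le)) //.
have -> : c * (2 * M * a * b) = 2 * M * b * (c * a) by ring.
have -> : 2 * s * M * W * b = 2 * M * b * (s * W) by ring.
by rewrite ler_wpM2l ?mulr_ge0.
Qed.

End RealInequalities.

Section SesquilinearForms.
Context {R : realType} {V : lmodType R[i]}.
Implicit Types (f : V -> V -> R[i]) (x y : V) (t : R).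

Definition sesquilinear f :=
  (forall x y z c, f (x + c *: y) z = f x z + c * f y z) /\
  (forall x y z c, f z (x + c *: y) = f z x + c^*%C * f z y).

Definition hermitian_form f := forall x y, f y x = (f x y)^*%C.

Definition positive_form f := forall x, 0 <= Re (f x x).

Definition sectorial_form t f :=
  forall x, 0 <= Re (f x x) /\ `|Im (f x x)| <= t * Re (f x x).

Lemma sesquilinear_diagZ f r x : sesquilinear f ->
  f (r%:C *: x) (r%:C *: x) = (r ^+ 2)%:C * f x x.
Proof.
case=> lin antilin.
have f0x z : f 0 z = 0.
  by have := lin x x z (-1); rewrite scaleN1r subrr mulN1r subrr.
have fx0 z : f z 0 = 0.
  by have := antilin x x z (-1); rewrite scaleN1r subrr rmorphN1 mulN1r subrr.
have := lin 0 x (r%:C *: x) r%:C; rewrite add0r => ->.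
have := antilin 0 x x r%:C; rewrite add0r => ->.
by rewrite f0x fx0 conjc_real rmorphXn /=; ring.
Qed.

Lemma cauchy_schwarz_form f x y :
  sesquilinear f -> hermitian_form f -> positive_form f ->
  cmod (f x y) ^+ 2 <= Re (f x x) * Re (f y y).
Proof.
move=> [lin antilin] herm pos.
apply: le_mul_of_quadratic_ge0; rewrite ?pos ?sqr_ge0 // => l.
have := pos (x + (- (l%:C * f x y)) *: y).
rewrite lin !antilin (herm x y) cmod_sqr.
by move: (f x y) (f x x) (f y y) => [a b] [c d] [e g] /=; lra.
Qed.

Definition hermitian_part (c : R[i]) f : V -> V -> R[i] :=
  fun x y => c * f x y + (c * f y x)^*%C.

Lemma sesquilinear_hermitian_part c f :
  sesquilinear f -> sesquilinear (hermitian_part c f).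
Proof.
case=> lin antilin; split=> x y z d;
  by rewrite /hermitian_part lin antilin !(rmorphM, rmorphD) /= ?conjcK; ring.
Qed.

Lemma hermitian_hermitian_part c f : hermitian_form (hermitian_part c f).
Proof. by move=> x y; rewrite /hermitian_part rmorphD /= conjcK addrC. Qed.

Lemma Re_hermitian_part c f x :
  Re (hermitian_part c f x x) = 2 * Re (c * f x x).
Proof. by rewrite /hermitian_part; case: (c * f x x) => a b /=; ring. Qed.

Lemma positive_hermitian_part_sectorial t f : sectorial_form t f ->
  positive_form (hermitian_part (t%:C - 'i%C) f) /\
  positive_form (hermitian_part (t%:C + 'i%C) f).
Proof.
move=> sect; split=> u; rewrite Re_hermitian_part;
  have [_ /ler_normlP[]] := sect u; case: (f u u) => a b /=; lra.
Qed.

Lemma sectorial0_hermitian f :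
  sesquilinear f -> sectorial_form 0 f -> hermitian_form f.
Proof.
(* For t = 0 the form P := hermitian_part (-i) f is positive with zero
   diagonal, so it vanishes by Cauchy-Schwarz; P v u = 0 says f v u = (f u v)^*. *)
move=> sf sect u v.
have [posP _] := positive_hermitian_part_sectorial _ _ sect.
have ReP0 w : Re (hermitian_part (0%:C - 'i%C) f w w) = 0.
  rewrite Re_hermitian_part; have [_] := sect w; rewrite mul0r normr_le0.
  by case: (f w w) => a b /= /eqP ->; ring.
have : hermitian_part (0%:C - 'i%C) f v u = 0.
  apply: cmod_eq0; apply/eqP; rewrite -sqrf_eq0 eq_le sqr_ge0 andbT.
  rewrite (le_trans (cauchy_schwarz_form _ v u _ _ posP)) ?ReP0 ?mulr0 //.
    exact: sesquilinear_hermitian_part.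
  exact: hermitian_hermitian_part.
rewrite /hermitian_part; move: (f v u) (f u v) => [a b] [c d] /= /eqP.
rewrite eq_complex /= => /andP[/eqP e1 /eqP e2].
by apply/eqP; rewrite eq_complex /=; apply/andP; split; apply/eqP; lra.
Qed.

Lemma hermitian_part_decomposition t f x y :
  (4 * t)%:C * f x y = (1 + 'i%C * t%:C) * hermitian_part (t%:C - 'i%C) f x y
                     + (1 - 'i%C * t%:C) * hermitian_part (t%:C + 'i%C) f x y.
Proof.
rewrite /hermitian_part; move: (f x y) (f y x) => [a b] [c d].
by apply/eqP; rewrite eq_complex /=; apply/andP; split; apply/eqP; ring.
Qed.

Lemma sectorial_cauchy_schwarz t f x y :
  sesquilinear f -> 0 <= t -> sectorial_form t f ->
  cmod (f x y) ^+ 2 <= (1 + t ^+ 2) * Re (f x x) * Re (f y y).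
Proof.
move=> sf t_ge0 sect; have [t0|t_neq0] := eqVneq t 0.
  move: sect; rewrite t0 expr0n addr0 mul1r => sect.
  apply: cauchy_schwarz_form => // [|u]; first exact: sectorial0_hermitian.
  by have [] := sect u.
pose P := hermitian_part (t%:C - 'i%C) f.
pose Q := hermitian_part (t%:C + 'i%C) f.
have [posP posQ] := positive_hermitian_part_sectorial _ _ sect.
have csP := cauchy_schwarz_form _ x y (sesquilinear_hermitian_part _ _ sf)
  (hermitian_hermitian_part _ _) posP.
have csQ := cauchy_schwarz_form _ x y (sesquilinear_hermitian_part _ _ sf)
  (hermitian_hermitian_part _ _) posQ.
have t_gt0 : 0 < t by rewrite lt_def t_neq0 t_ge0.
set s := cmod (1 + 'i%C * t%:C).
have s_sqr : s ^+ 2 = 1 + t ^+ 2 by rewrite /s cmod_sqr /=; ring.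
have cmod_conj_s : cmod (1 - 'i%C * t%:C) = s.
  by rewrite /s /cmod /=; congr Num.sqrt; ring.
have triangle : 4 * t * cmod (f x y) <= s * (cmod (P x y) + cmod (Q x y)).
  rewrite -[4 * t]ger0_norm ?mulr_ge0 // -cmod_real -cmodM.
  rewrite hermitian_part_decomposition (le_trans (cmodD _ _)) //.
  by rewrite !cmodM cmod_conj_s -mulrDr.
have PQ : (cmod (P x y) + cmod (Q x y)) ^+ 2 <=
    (4 * t * Re (f x x)) * (4 * t * Re (f y y)).
  have RePQ u : 4 * t * Re (f u u) = Re (P u u) + Re (Q u u).
    by rewrite !Re_hermitian_part; case: (f u u) => a b /=; ring.
  by rewrite !RePQ sqrD_le_mulD ?cmod_ge0 ?posP ?posQ.
have t4_gt0 : 0 < (4 * t) ^+ 2 by rewrite exprn_gt0 ?mulr_gt0.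
rewrite -(ler_pM2l t4_gt0) -exprMn.
rewrite (le_trans (_ : _ <= (s * (cmod (P x y) + cmod (Q x y))) ^+ 2)) //.
  by rewrite ler_sqr ?nnegrE ?(mulr_ge0, addr_ge0, cmod_ge0).
have := sqr_ge0 t; rewrite exprMn s_sqr; nra.
Qed.

End SesquilinearForms.

Section InnerProduct.
Context {R : realType} {n : nat}.
Implicit Types (x y w : 'cV[R[i]]_n) (c : R[i]).

Lemma innerDl x y w : inner (x + y) w = inner x w + inner y w.
Proof. by rewrite /inner -big_split; apply: eq_bigr => i _; rewrite mxE mulrDl. Qed.

Lemma innerDr x y w : inner w (x + y) = inner w x + inner w y.
Proof.
by rewrite /inner -big_split; apply: eq_bigr => i _; rewrite mxE rmorphD mulrDr.
Qed.

Lemma innerZl c x w : inner (c *: x) w = c * inner x w.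
Proof. by rewrite /inner mulr_sumr; apply: eq_bigr => i _; rewrite mxE mulrA. Qed.

Lemma innerZr c x w : inner w (c *: x) = c^*%C * inner w x.
Proof.
rewrite /inner mulr_sumr; apply: eq_bigr => i _.
by rewrite mxE rmorphM /= mulrCA.
Qed.

Lemma innerC x y : inner y x = (inner x y)^*%C.
Proof.
rewrite /inner rmorph_sum; apply: eq_bigr => i _.
by rewrite rmorphM /= conjcK mulrC.
Qed.

Lemma inner0r w : inner w 0 = 0.
Proof. by rewrite -(scale0r 0) innerZr conjc0 mul0r. Qed.

Lemma sesquilinear_inner : sesquilinear (@inner R n).
Proof. by split=> x y z c; rewrite ?innerDl ?innerDr ?innerZl ?innerZr. Qed.

Lemma Re_inner_self x : Re (inner x x) = \sum_i cmod (x i 0) ^+ 2.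
Proof.
rewrite /inner; elim/big_rec2: _ => // i a z _ <-.
by rewrite cmod_sqr; case: (x i 0) (z) => [b d] [e g] /=; ring.
Qed.

Lemma Im_inner_self x : Im (inner x x) = 0.
Proof.
apply: (big_ind (fun z : R[i] => Im z = 0)) => [//|[a b] [c d] /= -> ->|i _].
  exact: addr0.
by case: (x i 0) => a b /=; ring.
Qed.

Lemma positive_inner : positive_form (@inner R n).
Proof. by move=> x; rewrite Re_inner_self sumr_ge0 // => i _; rewrite sqr_ge0. Qed.

Lemma vnorm_ge0 x : 0 <= vnorm x.
Proof. exact: sqrtr_ge0. Qed.

Lemma vnorm_sqr x : vnorm x ^+ 2 = Re (inner x x).
Proof. by rewrite sqr_sqrtr // positive_inner. Qed.

Lemma inner_self x : inner x x = (vnorm x ^+ 2)%:C.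
Proof.
by rewrite vnorm_sqr; move: (Im_inner_self x); case: (inner x x) => a b /= ->.
Qed.

Lemma vnorm0 : vnorm (0 : 'cV[R[i]]_n) = 0.
Proof. by rewrite /vnorm inner0r sqrtr0. Qed.

Lemma vnorm_eq0 x : (vnorm x == 0) = (x == 0).
Proof.
apply/eqP/eqP => [x0|->]; last exact: vnorm0.
have : \sum_i cmod (x i 0) ^+ 2 == 0.
  by rewrite -Re_inner_self -vnorm_sqr x0 expr0n.
rewrite psumr_eq0 => [/allP x_eq0|i _]; last exact: sqr_ge0.
apply/matrixP => i j; rewrite (ord1 j) mxE; apply: cmod_eq0.
by have /implyP/(_ isT) := x_eq0 i (mem_index_enum _); rewrite sqrf_eq0 => /eqP.
Qed.

Lemma vnormZ c x : vnorm (c *: x) = cmod c * vnorm x.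
Proof.
rewrite /vnorm !Re_inner_self.
under eq_bigr do rewrite mxE cmodM exprMn.
by rewrite -mulr_sumr sqrtrM ?sqr_ge0 // sqrtr_sqr ger0_norm ?cmod_ge0.
Qed.

Lemma vnormN x : vnorm (- x) = vnorm x.
Proof. by rewrite -scaleN1r vnormZ cmodN cmodE Normc.normc1 mul1r. Qed.

Lemma cauchy_schwarz_inner x y : cmod (inner x y) <= vnorm x * vnorm y.
Proof.
rewrite -ler_sqr ?nnegrE ?mulr_ge0 ?cmod_ge0 ?vnorm_ge0 // exprMn !vnorm_sqr.
exact: cauchy_schwarz_form sesquilinear_inner innerC positive_inner.
Qed.

Lemma vnormD x y : vnorm (x + y) <= vnorm x + vnorm y.
Proof.
have expand : Re (inner (x + y) (x + y)) =
    vnorm x ^+ 2 + 2 * Re (inner x y) + vnorm y ^+ 2.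
  rewrite innerDl !innerDr (innerC x y) !vnorm_sqr.
  by move: (inner x y) (inner x x) (inner y y) => [a b] [c d] [e g] /=; ring.
rewrite -ler_sqr ?nnegrE ?addr_ge0 ?vnorm_ge0 // vnorm_sqr expand.
have := Re_le_cmod (inner x y); have := cauchy_schwarz_inner x y; lra.
Qed.

Definition normalize x := (vnorm x)^-1%:C *: x.

Lemma normalizeK x : (vnorm x)%:C *: normalize x = x.
Proof.
have [->|x_neq0] := eqVneq x 0; first by rewrite /normalize !scaler0.
have nx : vnorm x != 0 by rewrite vnorm_eq0.
by rewrite scalerA -rmorphM /= divff // scale1r.
Qed.

Lemma vnorm_normalize x : x != 0 -> vnorm (normalize x) = 1.
Proof.
move=> x_neq0; have nx : vnorm x != 0 by rewrite vnorm_eq0.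
by rewrite vnormZ cmod_real ger0_norm ?invr_ge0 ?vnorm_ge0 // mulVf.
Qed.

Lemma inner_delta w i : inner w (delta_mx i 0) = w i 0.
Proof.
rewrite /inner (bigD1 i) //= big1 => [|j /negPf ji]; rewrite !mxE ?eqxx ?ji //.
  by rewrite conjc1 mulr1 addr0.
by rewrite conjc0 mulr0.
Qed.

End InnerProduct.

Section Suprema.
Context {R : realType}.
Implicit Types (E : set R) (b : R).

Lemma sup_ge0 E : has_ubound E -> (forall r, E r -> 0 <= r) -> 0 <= sup E.
Proof.
move=> ubE E_ge0; have [[r Er]|/set0P/negP/negPn/eqP->] := pselect (E !=set0).
  exact: le_trans (E_ge0 r Er) (ub_le_sup ubE Er).
by rewrite sup0.
Qed.

Lemma ge_sup_ge0 E b : 0 <= b -> ubound E b -> sup E <= b.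
Proof.
move=> b_ge0 ubE; have [E_neq0|/set0P/negP/negPn/eqP->] := pselect (E !=set0).
  exact: ge_sup.
by rewrite sup0.
Qed.

End Suprema.

Section OperatorNorm.
Context {R : realType} {n : nat}.
Implicit Types (M N : 'M[R[i]]_n) (x : 'cV[R[i]]_n).

Lemma has_ubound_opnorm M :
  has_ubound [set vnorm (M *m x) | x in [set x | vnorm x = 1]].
Proof.
(* The Frobenius norm bounds M on unit vectors, by Cauchy-Schwarz on each row. *)
exists (Num.sqrt (\sum_i vnorm (\col_j (M i j)^*%C) ^+ 2)) => _ [x x1 <-].
rewrite -[vnorm _]ger0_norm ?vnorm_ge0 // -sqrtr_sqr ler_sqrt; last first.
  by rewrite sumr_ge0 // => i _; rewrite sqr_ge0.
rewrite vnorm_sqr Re_inner_self; apply: ler_sum => i _.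
have -> : (M *m x) i 0 = inner x (\col_j (M i j)^*%C).
  by rewrite mxE; apply: eq_bigr => j _; rewrite mxE conjcK mulrC.
rewrite -[X in _ <= X]mul1r -(expr1n _ 2) -x1 -exprMn.
by rewrite ler_sqr ?nnegrE ?mulr_ge0 ?vnorm_ge0 ?cmod_ge0 ?cauchy_schwarz_inner.
Qed.

Lemma vnorm_le_opnorm M x : vnorm x = 1 -> vnorm (M *m x) <= opnorm M.
Proof. by move=> x1; apply: (ub_le_sup (has_ubound_opnorm M)); exists x. Qed.

Lemma opnorm_ge0 M : 0 <= opnorm M.
Proof. by apply: sup_ge0 (has_ubound_opnorm M) _ => _ [x _ <-]; apply: vnorm_ge0. Qed.

Lemma opnorm_le M b :
  0 <= b -> (forall x, vnorm x = 1 -> vnorm (M *m x) <= b) -> opnorm M <= b.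
Proof. by move=> b_ge0 Mb; apply: ge_sup_ge0 => // _ [x x1 <-]; apply: Mb. Qed.

Lemma vnorm_mulmx_le M x : vnorm (M *m x) <= opnorm M * vnorm x.
Proof.
have [->|x_neq0] := eqVneq x 0; first by rewrite mulmx0 vnorm0 mulr0.
rewrite -{1}(normalizeK x) -scalemxAr vnormZ cmod_real ger0_norm ?vnorm_ge0 //.
by rewrite mulrC ler_wpM2r ?vnorm_ge0 ?vnorm_le_opnorm ?vnorm_normalize.
Qed.

Lemma opnormD M N : opnorm (M + N) <= opnorm M + opnorm N.
Proof.
apply: opnorm_le => [|x x1]; first by rewrite addr_ge0 ?opnorm_ge0.
by rewrite mulmxDl (le_trans (vnormD _ _)) // lerD ?vnorm_le_opnorm.
Qed.

Lemma opnormN M : opnorm (- M) = opnorm M.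
Proof. by rewrite /opnorm; congr sup; apply: eq_imagel => x _; rewrite mulNmx vnormN. Qed.

Lemma opnormM M N : opnorm (M *m N) <= opnorm M * opnorm N.
Proof.
apply: opnorm_le => [|x x1]; first by rewrite mulr_ge0 ?opnorm_ge0.
rewrite -mulmxA (le_trans (vnorm_mulmx_le _ _)) // ler_wpM2l ?opnorm_ge0 //.
exact: vnorm_le_opnorm.
Qed.

Lemma opnorm_mulmx3_le M N P : opnorm (M *m N *m P) <= opnorm M * opnorm N * opnorm P.
Proof. by rewrite (le_trans (opnormM _ _)) // ler_wpM2r ?opnorm_ge0 ?opnormM. Qed.

End OperatorNorm.

Section QNumericalRadius.
Context {R : realType} {n : nat}.
Implicit Types (q : R[i]) (X A : 'M[R[i]]_n) (u x y z : 'cV[R[i]]_n).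

Lemma cmod_inner_mulmx_le X x y :
  vnorm x = 1 -> vnorm y = 1 -> cmod (inner (X *m x) y) <= opnorm X.
Proof.
move=> x1 y1; rewrite (le_trans (cauchy_schwarz_inner _ _)) // y1 mulr1.
exact: vnorm_le_opnorm.
Qed.

Lemma has_ubound_wq q X : has_ubound [set r : R | exists x y,
  [/\ vnorm x = 1, vnorm y = 1, inner x y = q & r = cmod (inner (X *m x) y)]].
Proof. by exists (opnorm X) => _ [x [y [x1 y1 _ ->]]]; apply: cmod_inner_mulmx_le. Qed.

Lemma le_wq q X x y : vnorm x = 1 -> vnorm y = 1 -> inner x y = q ->
  cmod (inner (X *m x) y) <= wq q X.
Proof. by move=> x1 y1 xyq; apply: (ub_le_sup (has_ubound_wq q X)); exists x, y. Qed.

Lemma wq_ge0 q X : 0 <= wq q X.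
Proof.
by apply: sup_ge0 (has_ubound_wq q X) _ => _ [x [y [_ _ _ ->]]]; apply: cmod_ge0.
Qed.

Lemma wq_le_opnorm q X : wq q X <= opnorm X.
Proof.
apply: ge_sup_ge0 (opnorm_ge0 X) _ => _ [x [y [x1 y1 _ ->]]].
exact: cmod_inner_mulmx_le.
Qed.

Lemma exists_sign_cmodD_ge (w1 w2 : R[i]) :
  exists e : R, e ^+ 2 = 1 /\ cmod w1 <= cmod (w1 + e%:C * w2).
Proof.
have [h|h] := lerP 0 (Re w1 * Re w2 + Im w1 * Im w2); [exists 1 | exists (-1)];
  rewrite ?sqrrN expr1n; split=> //; rewrite -ler_sqr ?nnegrE ?cmod_ge0 //;
  by rewrite !cmod_sqr; case: w1 w2 h => [a b] [c d] /= h; nra.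
Qed.

Lemma cmod_numrange_le_wq q A u z :
  cmod q <= 1 -> vnorm u = 1 -> inner u z = 0 -> vnorm z = 1 \/ cmod q = 1 ->
  cmod q * cmod (inner (A *m u) u) <= wq q A.
Proof.
move=> q_le1 u1 uz0 z1_or_q1.
set s := Num.sqrt (1 - cmod q ^+ 2).
have s_sqr : s ^+ 2 = 1 - cmod q ^+ 2.
  by rewrite sqr_sqrtr // subr_ge0 expr_le1 ?cmod_ge0.
have [e [e_sqr le_e]] :=
  exists_sign_cmodD_ge (q * inner (A *m u) u) (s%:C * inner (A *m u) z).
pose y := q^*%C *: u + (s * e)%:C *: z.
have uu : inner u u = 1 by rewrite inner_self u1 expr1n.
have zu : inner z u = 0 by rewrite innerC uz0 conjc0.
have uy : inner u y = q.
  by rewrite innerDr !innerZr uz0 uu conjcK mulr1 mulr0 addr0.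
have y1 : vnorm y = 1.
  apply/eqP; rewrite -(eqrXn2 (_ : 0 < 2)%N) ?vnorm_ge0 // expr1n vnorm_sqr.
  rewrite !(innerDl, innerDr, innerZl, innerZr) uu uz0 zu inner_self conjcK.
  rewrite conjc_real !mulr0 !addr0 add0r mulr1.
  have Re_expand (w : R[i]) :
      Re (w^*%C * w + (s * e)%:C * ((s * e)%:C * (vnorm z ^+ 2)%:C)) =
      cmod w ^+ 2 + (s * e) ^+ 2 * vnorm z ^+ 2.
    by rewrite cmod_sqr; case: w => a b /=; ring.
  rewrite Re_expand exprMn e_sqr s_sqr mulr1.
  by case: z1_or_q1 => ->; rewrite ?expr1n ?subrr ?mul0r ?addr0 ?mulr1 // addrC subrK.
apply: le_trans (le_wq _ _ _ _ u1 y1 uy).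
rewrite -cmodM (le_trans le_e) // le_eqVlt; apply/orP; left; apply/eqP.
by rewrite innerDr !innerZr conjcK conjc_real rmorphM mulrA [e%:C * _]mulrC.
Qed.

End QNumericalRadius.

Section LowDimension.
Context {R : realType}.

Lemma exists_unit_orthogonal n (u : 'cV[R[i]]_n) : (1 < n)%N ->
  exists z, vnorm z = 1 /\ inner u z = 0.
Proof.
move=> n_gt1; pose i0 := Ordinal (ltnW n_gt1); pose i1 := Ordinal n_gt1.
suff [z z_neq0 uz0] : exists2 z : 'cV[R[i]]_n, z != 0 & inner u z = 0.
  by exists (normalize z); rewrite vnorm_normalize // innerZr uz0 mulr0.
have delta_neq0 i : delta_mx i 0 != 0 :> 'cV[R[i]]_n.
  by apply/eqP => /matrixP/(_ i 0)/eqP; rewrite !mxE !eq_refl oner_eq0.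
have [u0|u0_neq0] := eqVneq (u i0 0) 0.
  by exists (delta_mx i0 0); rewrite ?inner_delta.
exists ((u i1 0)^*%C *: delta_mx i0 0 + (- (u i0 0)^*%C) *: delta_mx i1 0).
  apply: contra u0_neq0 => /eqP/matrixP/(_ i1 0); rewrite !mxE /= mulr0 add0r.
  by rewrite mulr1 => /eqP; rewrite oppr_eq0 conjc_eq0.
by rewrite innerDr !innerZr !inner_delta rmorphN /= !conjcK mulrC mulNr subrr.
Qed.

Lemma cmod_inner_dim_le1 n (x y : 'cV[R[i]]_n) : (n <= 1)%N ->
  cmod (inner x y) = vnorm x * vnorm y.
Proof.
case: n x y => [|[|//]] x y _.
  by rewrite [y]flatmx0 inner0r vnorm0 mulr0 cmodE Normc.normc0.
rewrite /inner big_ord1 cmodM cmodJ /vnorm !Re_inner_self !big_ord1.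
by rewrite !sqrtr_sqr !ger0_norm ?cmod_ge0.
Qed.

Lemma wq_eq0 n q (X : 'M[R[i]]_n) : (n <= 1)%N -> cmod q < 1 -> wq q X = 0.
Proof.
move=> n_le1 q_lt1; apply/le_anti; rewrite wq_ge0 andbT.
apply: ge_sup_ge0 => // r [x [y [x1 y1 xyq _]]]; move: q_lt1.
by rewrite -xyq cmod_inner_dim_le1 // x1 y1 mulr1 ltxx.
Qed.

Lemma numrange_le_wq_or_wq_eq0 n q (A : 'M[R[i]]_n) : cmod q <= 1 ->
  (forall u, vnorm u = 1 -> cmod q * cmod (inner (A *m u) u) <= wq q A) \/
  (forall X : 'M[R[i]]_n, wq q X = 0).
Proof.
move=> q_le1; have [q1|q_neq1] := eqVneq (cmod q) 1.
  by left=> u u1; apply: cmod_numrange_le_wq q_le1 u1 (inner0r u) _; right.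
have [n_gt1|n_le1] := ltnP 1 n.
  left=> u u1; have [z [z1 uz0]] := exists_unit_orthogonal _ u n_gt1.
  by apply: cmod_numrange_le_wq q_le1 u1 uz0 _; left.
by right=> X; apply: wq_eq0 => //; rewrite lt_neqAle q_neq1.
Qed.

End LowDimension.

Section SectorialMatrices.
Context {R : realType} {n : nat}.
Implicit Types (A : 'M[R[i]]_n) (u : 'cV[R[i]]_n).

Lemma sesquilinear_mxform A :
  sesquilinear (fun x y : 'cV[R[i]]_n => inner (A *m x) y).
Proof.
by split=> x y z c; rewrite ?mulmxDr -?scalemxAr ?innerDl ?innerDr ?innerZl ?innerZr.
Qed.

Lemma mxform_normalize A u : inner (A *m u) u =
  (vnorm u ^+ 2)%:C * inner (A *m normalize u) (normalize u).
Proof.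
by rewrite -{1 2}(normalizeK u) (sesquilinear_diagZ _ _ _ (sesquilinear_mxform A)).
Qed.

Lemma sectorial_Pi_s alpha A : A \in Pi_s alpha ->
  sectorial_form (tan alpha) (fun x y => inner (A *m x) y).
Proof.
move=> /set_mem A_sect u; rewrite mxform_normalize Re_realM Im_realM.
have [->|u_neq0] := eqVneq u 0.
  by rewrite vnorm0 expr0n !mul0r normr0 mulr0.
have [|Re_gt0 Im_le] := A_sect (inner (A *m normalize u) (normalize u)).
  by exists (normalize u) => //; exact: vnorm_normalize.
split; first by rewrite mulr_ge0 ?sqr_ge0 ?ltW.
by rewrite normrM ger0_norm ?sqr_ge0 // mulrCA ler_wpM2l ?sqr_ge0.
Qed.

Lemma Re_mxform_le A m u :
  (forall v, vnorm v = 1 -> Re (inner (A *m v) v) <= m) ->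
  Re (inner (A *m u) u) <= m * vnorm u ^+ 2.
Proof.
move=> Am; rewrite mxform_normalize Re_realM [X in _ <= X]mulrC.
have [->|u_neq0] := eqVneq u 0; first by rewrite vnorm0 expr0n !mul0r.
by rewrite ler_wpM2l ?sqr_ge0 ?Am ?vnorm_normalize.
Qed.

Lemma opnorm_le_sectorial A t m : 0 <= t -> 0 <= m ->
  sectorial_form t (fun x y => inner (A *m x) y) ->
  (forall u, vnorm u = 1 -> Re (inner (A *m u) u) <= m) ->
  opnorm A <= Num.sqrt (1 + t ^+ 2) * m.
Proof.
move=> t_ge0 m_ge0 sect Am.
apply: opnorm_le => [|x x1]; first by rewrite mulr_ge0 ?sqrtr_ge0.
set y := A *m x.
(* Cauchy-Schwarz at (x, Ax): ||Ax||^4 <= (1 + t^2) Re<Ax,x> Re<A(Ax),Ax>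
   <= (1 + t^2) m^2 ||Ax||^2. *)
have cs := sectorial_cauchy_schwarz _ _ x y (sesquilinear_mxform A) t_ge0 sect.
rewrite /= inner_self cmod_real ger0_norm ?sqr_ge0 // in cs.
have Rex := Am x x1; have Rey := Re_mxform_le _ _ y Am.
have [[Rex_ge0 _] [Rey_ge0 _]] := (sect x, sect y).
have y_le : vnorm y ^+ 2 <= (1 + t ^+ 2) * m ^+ 2.
  have [y0|y_neq0] := eqVneq (vnorm y) 0.
    by rewrite y0 expr0n mulr_ge0 ?addr_ge0 ?sqr_ge0.
  have y_gt0 : 0 < vnorm y ^+ 2 by rewrite exprn_gt0 // lt_def y_neq0 vnorm_ge0.
  rewrite -(ler_pM2r y_gt0).
  rewrite -expr2 (le_trans cs) //.
  by rewrite -!mulrA ler_wpM2l ?addr_ge0 ?sqr_ge0 // ler_pM.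
have T_sqr : Num.sqrt (1 + t ^+ 2) ^+ 2 = 1 + t ^+ 2.
  by rewrite sqr_sqrtr // addr_ge0 ?sqr_ge0.
by rewrite -ler_sqr ?nnegrE ?mulr_ge0 ?sqrtr_ge0 ?vnorm_ge0 // exprMn T_sqr.
Qed.

Lemma cmod_opnorm_le_sectorial alpha q A :
  0 <= alpha < pi / 2 -> A \in Pi_s alpha -> 0 < cmod q ->
  (forall u, vnorm u = 1 -> cmod q * cmod (inner (A *m u) u) <= wq q A) ->
  cmod q * opnorm A <= (cos alpha)^-1 * wq q A.
Proof.
move=> /andP[alpha_ge0 alpha_lt] A_sect q_gt0 numrange_le.
have pi_gt0 : (0 : R) < pi := pi_gt0 R.
have cos_gt0 : 0 < cos alpha by apply: cos_gt0_pihalf; apply/andP; split; lra.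
have tan_ge0 : 0 <= tan alpha.
  by rewrite /tan divr_ge0 ?(ltW cos_gt0) // sin_ge0_pi //; apply/andP; split; lra.
have <- : Num.sqrt (1 + tan alpha ^+ 2) = (cos alpha)^-1.
  by rewrite -cos2_tan2 ?gt_eqF // -exprVn sqrtr_sqr ger0_norm // invr_ge0 ltW.
rewrite mulrC -ler_pdivlMr // -mulrA.
apply: opnorm_le_sectorial _ _ _ tan_ge0 _ (sectorial_Pi_s _ _ A_sect) _.
  by rewrite divr_ge0 ?wq_ge0 ?ltW.
move=> u u1; rewrite (le_trans (Re_le_cmod _)) // ler_pdivlMr // mulrC.
exact: numrange_le.
Qed.

End SectorialMatrices.

Theorem theorem2p18 (R : realType) (n : nat) (alpha : R)
    (B C D A : 'M[R[i]]_n) (q : R[i]) :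
  0 <= alpha < pi / 2 ->
  A \in @Pi_s R n alpha ->
  0 < cmod q <= 1 ->
  cmod q * wq q (A *m C *m B + B *m D *m A)
    <= 2 * (cos alpha)^-1 * Num.max (opnorm C) (opnorm D) * wq q A * opnorm B /\
  cmod q * wq q (A *m C *m B - B *m D *m A)
    <= 2 * (cos alpha)^-1 * Num.max (opnorm C) (opnorm D) * wq q A * opnorm B.
Proof.
move=> alpha_range A_sect /andP[q_gt0 q_le1].
have C_le := le_max_l (opnorm C) (opnorm D).
have D_le := le_max_r (opnorm C) (opnorm D).
have M_ge0 := le_trans (opnorm_ge0 C) C_le.
suff bound (Y : 'M_n) : opnorm Y <= opnorm (B *m D *m A) ->
    cmod q * wq q (A *m C *m B + Y) <=
    2 * (cos alpha)^-1 * Num.max (opnorm C) (opnorm D) * wq q A * opnorm B.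
  by split; [exact: bound (lexx _) | apply: bound; rewrite opnormN].
move=> Y_le; have [numrange_le|wq0] := numrange_le_wq_or_wq_eq0 _ q A q_le1; last first.
  by rewrite !wq0 !mulr0 mul0r.
have A_le := cmod_opnorm_le_sectorial _ _ _ alpha_range A_sect q_gt0 numrange_le.
apply: ler_wpM_subst (cmod_ge0 q) M_ge0 (opnorm_ge0 B) _ A_le.
apply: le_trans (wq_le_opnorm _ _) _; apply: le_trans (opnormD _ _) _.
have sum_le := lerD (opnorm_mulmx3_le A C B) (le_trans Y_le (opnorm_mulmx3_le B D A)).
exact: le_trans sum_le (sum_mul3_le (opnorm_ge0 A) (opnorm_ge0 B) C_le D_le).
Qed.
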